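(* There exists a constant $C>0$ such that for all $v=(v^1,\dots,v^{n_{\mathcal E}})\in L^2_{H^1}(\mathcal N;\mathbb{R}^3)$ and all $V\in\mathbb{R}^{3n_{\mathcal V}}$, \[ \|v\|_{L^2(\mathcal N;\mathbb{R}^3)}\le C\Big(\|v'\|^2_{L^2(\mathcal N;\mathbb{R}^3)}+\Big|\int_{\mathcal N}v\Big|^2+\big|v(0)-(A^-_I)^TV\big|^2+\big|v(\ell)-(A^+_I)^TV\big|^2\Big)^{1/2}, \] where $v'=(\partial_sv^1,\dots,\partial_sv^{n_{\mathcal E}})$, $v(0)=[v^1(0),\dots,v^{n_{\mathcal E}}(0)]^T\in\mathbb{R}^{3n_{\mathcal E}}$, $v(\ell)=[v^1(\ell^1),\dots,v^{n_{\mathcal E}}(\ell^{n_{\mathcal E}})]^T\in\mathbb{R}^{3n_{\mathcal E}}$, and $|\cdot|$ denotes the Euclidean norm.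
   Context: A finite connected graph with vertices $j=1,\dots,n_{\mathcal V}$ and oriented edges $i=1,\dots,n_{\mathcal E}$; edge $i$ has length $\ell^i>0$ and is identified with the interval $[0,\ell^i]$, $s=0$ corresponding to the vertex it leaves and $s=\ell^i$ to the vertex it enters. $J_j^-$ ($J_j^+$) is the set of edges leaving (entering) vertex $j$. $A^+_{I}\in\mathbb{R}^{3n_{\mathcal V}\times 3n_{\mathcal E}}$ is the block matrix whose $3\times3$ block in block row $j$, block column $i$ is $I_3$ if $i\in J_j^+$ and $0$ otherwise; $A^-_I$ is defined likewise with $J_j^-$. $L^2(\mathcal N;\mathbb{R}^3)=\prod_iL^2(0,\ell^i;\mathbb{R}^3)$, $L^2_{H^1}(\mathcal N;\mathbb{R}^3)=\prod_iH^1(0,\ell^i;\mathbb{R}^3)$ (no continuity at vertices), with norms $\|y\|=(\sum_i\|y^i\|^2)^{1/2}$; $\int_{\mathcal N}v=\sum_i\int_0^{\ell^i}v^i\,ds$. *)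

From HB Require Import structures.
From mathcomp Require Import all_boot all_order all_algebra.
From mathcomp Require Import all_classical all_reals all_analysis.
Set Implicit Arguments. Unset Strict Implicit. Unset Printing Implicit Defensive.
Import Order.TTheory GRing.Theory Num.Theory.
Import numFieldNormedType.Exports.
Local Open Scope classical_set_scope.
Local Open Scope ring_scope.

Definition int0 {R : realType} (s : R) (f : R -> R) : R :=
  (\int[@lebesgue_measure R]_(x in `[0, s]) f x)%R.

(* H^1(0,l) in one dimension: f is (the continuous representative of) an
   H^1 function with weak derivative f' in L^2(0,l):
   f' is measurable and square-integrable on [0,l], and
   f s = f 0 + \int_0^s f'  for all s in [0,l]. *)
Definition isH1 {R : realType} (l : R) (f f' : R -> R) : Prop :=
  [/\ measurable_fun `[0, l] f',
      (@lebesgue_measure R).-integrable `[0, l] (EFin \o (fun x => f' x ^+ 2))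
    & forall s, 0 <= s <= l -> f s = f 0 + int0 s f'].

Definition adjacent (nV nE : nat) (tail head : 'I_nE -> 'I_nV) : rel 'I_nV :=
  fun j k => [exists i : 'I_nE,
     ((tail i == j) && (head i == k)) || ((tail i == k) && (head i == j))].

Definition graph_connected (nV nE : nat) (tail head : 'I_nE -> 'I_nV) : Prop :=
  (0 < nV)%N /\ forall j k : 'I_nV, connect (adjacent tail head) j k.

Definition sqn3 {R : realType} (x : 'I_3 -> R) : R := \sum_(k < 3) x k ^+ 2.

Definition Jminus (nV nE : nat) (tail : 'I_nE -> 'I_nV) (j : 'I_nV) : pred 'I_nE :=
  fun i => tail i == j.
Definition Jplus (nV nE : nat) (head : 'I_nE -> 'I_nV) (j : 'I_nV) : pred 'I_nE :=
  fun i => head i == j.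

(* Block i (in R^3) of (A_I^{+/-})^T V, where V in R^{3 nV} is given by blocks
   V j in R^3 and block (j,i) of A_I^{+/-} is I_3 if i \in J_j^{+/-}, else 0. *)
Definition AT_apply {R : realType} (nV nE : nat) (J : 'I_nV -> pred 'I_nE)
    (V : 'I_nV -> 'I_3 -> R) (i : 'I_nE) (k : 'I_3) : R :=
  \sum_(j < nV) (if i \in J j then V j k else 0).

(* Write r^2 for the right-hand side. On each edge, Cauchy-Schwarz bounds the
   oscillation |v(s) - v(0)| by sqrt(l) ||v'||; together with the boundary
   terms this bounds the jump of V along every edge by O(r). Following paths
   in the connected graph, all vertex values, and hence all values of v, lie
   within O(r) of one constant c. The mean term bounds (total length) |c| by
   O(r), so v is uniformly O(r) and its L^2 norm is too. The estimate is
   proved for each of the three coordinates and then summed. *)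

From Pilot Require Import Defs.
From HB Require Import structures.
From mathcomp Require Import all_boot all_order all_algebra.
From mathcomp Require Import all_classical all_reals all_analysis.
From mathcomp Require Import lra ring measurable_realfun.
Set Implicit Arguments. Unset Strict Implicit. Unset Printing Implicit Defensive.
Import Order.TTheory GRing.Theory Num.Theory.
Import numFieldNormedType.Exports.
Local Open Scope classical_set_scope.
Local Open Scope ring_scope.

Section real_lemmas.
Context {R : realType}.

Lemma ler_sum_term n (F : 'I_n -> R) i : (forall j, 0 <= F j) -> F i <= \sum_j F j.
Proof. by move=> F0; rewrite (bigD1 i) //= lerDl sumr_ge0. Qed.

Lemma norm_le_sqrt (x T : R) : x ^+ 2 <= T -> `|x| <= Num.sqrt T.
Proof. by move=> xT; rewrite -sqrtr_sqr; exact: ler_wsqrtr. Qed.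

End real_lemmas.

Section itv0_integral.
Context {R : realType}.
Local Notation mu := (@lebesgue_measure R).

Lemma lebesgue_measure_itv0 (l : R) : 0 <= l -> mu `[0, l] = l%:E.
Proof.
move=> l0; rewrite lebesgue_measure_itv /= lte_fin oppr0 addr0.
by case: ltgtP l0 => // <-.
Qed.

Lemma Rintegral_itv0_cst (l c : R) : 0 <= l -> \int[mu]_(x in `[0, l]) c = c * l.
Proof.
move=> l0; rewrite Rintegral_cst // -[l in RHS]/(fine l%:E).
by congr (_ * fine _); exact: lebesgue_measure_itv0.
Qed.

Lemma integrable_itv0_bounded (l M : R) (g : R -> R) : 0 <= l ->
  measurable_fun `[0, l] g -> (forall s, 0 <= s <= l -> `|g s| <= M) ->
  mu.-integrable `[0, l] (EFin \o g).
Proof.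
move=> l0 mg gM; apply: measurable_bounded_integrable => //.
  by have /= := lebesgue_measure_itv0 l0 => ->; exact: ltry.
rewrite /bounded_near; near=> N => s; rewrite /= in_itv /= => /gM /le_trans; apply.
by near: N; exact: nbhs_pinfty_ge (num_real _).
Unshelve. all: end_near. Qed.

Lemma integrable_itv0_cst (l c : R) : 0 <= l ->
  mu.-integrable `[0, l] (EFin \o (fun=> c)).
Proof.
by move=> l0; apply: (integrable_itv0_bounded (M := `|c|)) => //; exact: measurable_cst.
Qed.

Lemma int0_bounds (l a b : R) (g : R -> R) : 0 <= l -> measurable_fun `[0, l] g ->
  (forall s, 0 <= s <= l -> a <= g s <= b) -> l * a <= int0 l g <= l * b.
Proof.
move=> l0 mg gab.
have ig : mu.-integrable `[0, l] (EFin \o g).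
  apply: (integrable_itv0_bounded (M := `|a| + `|b|)) => // s /gab /andP[ga gb].
  have := normr_ge0 a; have := normr_ge0 b; have := ler_norm b; have := ler_norm (- a).
  rewrite normrN ler_norml; lra.
rewrite ![l * _]mulrC -!Rintegral_itv0_cst //.
apply/andP; split; apply: le_Rintegral => //; try exact: integrable_itv0_cst.
all: by move=> x; rewrite /= in_itv /= => /gab /andP[].
Qed.

Lemma ge0_le_int0 (s l : R) (g : R -> R) : 0 <= s <= l ->
  mu.-integrable `[0, l] (EFin \o g) -> (forall x, 0 <= g x) ->
  int0 s g <= int0 l g.
Proof.
move=> /andP[s0 sl] ig g0; rewrite -subr_ge0 /int0.
by rewrite (@Rintegral_itvB _ _ (BLeft 0) (BRight l) s) ?bnd_simp // Rintegral_ge0.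
Qed.

Lemma sqr_int0_le (s : R) (g : R -> R) : 0 < s ->
  mu.-integrable `[0, s] (EFin \o g) ->
  mu.-integrable `[0, s] (EFin \o (fun x => g x ^+ 2)) ->
  int0 s g ^+ 2 <= s * int0 s (fun x => g x ^+ 2).
Proof.
move=> s_gt0 ig ig2; set B := int0 s g; set A := int0 s _.
pose c := B / s.
have Bcs : B = c * s by rewrite /c divfK // gt_eqF.
(* integrate the pointwise inequality [2 c g <= g^2 + c^2] *)
have : 2 * c * B <= A + c ^+ 2 * s.
  have -> : 2 * c * B = \int[mu]_(x in `[0, s]) (2 * c * g x).
    by rewrite RintegralZl.
  have ic : mu.-integrable `[0, s] (EFin \o (fun=> c ^+ 2)).
    exact: integrable_itv0_cst (ltW s_gt0).
  have -> : A + c ^+ 2 * s = \int[mu]_(x in `[0, s]) (g x ^+ 2 + c ^+ 2).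
    by rewrite RintegralD // Rintegral_itv0_cst // ltW.
  apply: le_Rintegral => //.
  - have -> : EFin \o (fun x => 2 * c * g x) = (fun x => (2 * c)%:E * (EFin \o g) x)%E.
      by apply/funext => x /=; rewrite EFinM.
    exact: integrableZl.
  - have -> : EFin \o (fun x => g x ^+ 2 + c ^+ 2) =
        (EFin \o (fun x => g x ^+ 2)) \+ (EFin \o (fun=> c ^+ 2)).
      by apply/funext => x /=; rewrite EFinD.
    exact: integrableD.
  - by move=> x _; have := sqr_ge0 (g x - c); nra.
by rewrite Bcs; nra.
Qed.

End itv0_integral.

Section isH1_function.
Context {R : realType}.
Local Notation mu := (@lebesgue_measure R).
Variables (l : R) (f f' : R -> R).
Hypotheses (l_gt0 : 0 < l) (fH1 : isH1 l f f').

Lemma isH1_integrable_deriv : mu.-integrable `[0, l] (EFin \o f').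
Proof.
case: fH1 => mf' i2 _.
apply: (@le_integrable _ _ _ mu _ (measurable_itv _) _ (EFin \o (fun x => f' x ^+ 2 + 1))).
- exact/measurable_EFinP.
- move=> x _ /=; rewrite lee_fin [`|_ + 1|]ger0_norm ?addr_ge0 ?sqr_ge0 //.
  rewrite -real_normK ?num_real //; set t := `|f' x|.
  by have := sqr_ge0 (t - 1); have := sqr_ge0 t; nra.
- have -> : EFin \o (fun x => f' x ^+ 2 + 1) =
      (EFin \o (fun x => f' x ^+ 2)) \+ (EFin \o (fun=> 1)).
    by apply/funext => x /=; rewrite EFinD.
  by apply: integrableD => //; exact: integrable_itv0_cst (ltW l_gt0).
Qed.

Lemma isH1_measurable : measurable_fun `[0, l] f.
Proof.
have F_cont := parameterized_integral_continuous (ltW l_gt0) isH1_integrable_deriv.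
have mF := subspace_continuous_measurable_fun (measurable_itv `[0, l]) F_cont.
apply: (@eq_measurable_fun _ _ _ _ _ (fun x => f 0 + parameterized_integral mu 0 x f')).
  move=> x; rewrite inE /= in_itv /= => x0l.
  by case: fH1 => _ _ fE; rewrite [f x]fE.
by apply: measurable_funD => //; exact: measurable_cst.
Qed.

(* Cauchy-Schwarz on [f s - f 0 = int_0^s f'] *)
Lemma isH1_oscillation s : 0 <= s <= l ->
  (f s - f 0) ^+ 2 <= l * int0 l (fun x => f' x ^+ 2).
Proof.
move=> /andP[s0 sl].
have i2 : mu.-integrable `[0, l] (EFin \o (fun x => f' x ^+ 2)) by case: fH1.
have A0 : 0 <= int0 l (fun x => f' x ^+ 2) by apply: Rintegral_ge0 => x _; exact: sqr_ge0.
case: (ltgtP 0 s) s0 => // [s_gt0 _|<- _]; last first.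
  by rewrite subrr expr0n mulr_ge0 // ltW.
have sub_s : `[0, s] `<=` `[0, l].
  by move=> x /=; rewrite !in_itv /= => /andP[-> /le_trans]; apply.
case: fH1 => _ _ fE; rewrite [f s]fE ?(ltW s_gt0) ?sl // addrC addKr.
apply: le_trans (sqr_int0_le s_gt0 _ _) _.
- exact: integrableS isH1_integrable_deriv.
- exact: integrableS i2.
apply: ler_pM => //; first exact: ltW.
  by apply: Rintegral_ge0 => x _; exact: sqr_ge0.
by apply: ge0_le_int0; rewrite ?(ltW s_gt0) // => x; exact: sqr_ge0.
Qed.

End isH1_function.

Section potential_on_graph.
Context {R : realType}.
Variables (nV nE : nat) (tail head : 'I_nE -> 'I_nV) (W : 'I_nV -> R) (B : R).
Hypothesis edge_le : forall i, `|W (head i) - W (tail i)| <= B.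

Lemma adjacent_dist_le x y : Defs.adjacent tail head x y -> `|W y - W x| <= B.
Proof.
by case/existsP=> i /orP[] /andP[/eqP <- /eqP <-] //; rewrite distrC.
Qed.

Lemma path_dist_le p x : path (Defs.adjacent tail head) x p ->
  `|W (last x p) - W x| <= (size p)%:R * B.
Proof.
elim: p x => [|y p IHp] x /=; first by rewrite subrr normr0 mul0r.
case/andP=> /adjacent_dist_le xy /IHp yp.
have := ler_normD (W (last y p) - W y) (W y - W x); rewrite addrA subrK.
rewrite -addn1 natrD mulrDl mul1r; lra.
Qed.

Lemma connect_dist_le x y : 0 <= B -> connect (Defs.adjacent tail head) x y ->
  `|W y - W x| <= nV%:R * B.
Proof.
move=> B0 /connectP[p xp ->]; case: (shortenP xp) => p' xp' p'_uniq _.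
apply: le_trans (path_dist_le xp') _; rewrite ler_wpM2r // ler_nat.
have := max_card (mem (x :: p')); rewrite card_ord (card_uniqP p'_uniq) /=.
by move/(leq_trans (leqnSn _)).
Qed.

End potential_on_graph.

Section scalar_poincare.
Context {R : realType}.
Variables (nV nE : nat) (tail head : 'I_nE -> 'I_nV) (ell : 'I_nE -> R).
Hypothesis ell_gt0 : forall i, 0 < ell i.

Definition total_length := \sum_(i < nE) ell i.

Local Notation L := total_length.

Lemma total_length_ge0 : 0 <= L.
Proof. by apply: sumr_ge0 => i _; exact: ltW. Qed.

Lemma ell_le_total_length i : ell i <= L.
Proof. by apply: ler_sum_term => j; exact: ltW. Qed.

Lemma approx_const_le (f : 'I_nE -> R -> R) (c d : R) :
  (forall i, measurable_fun `[0, ell i] (f i)) ->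
  (forall i s, 0 <= s <= ell i -> `|f i s - c| <= d) ->
  L * `|c| <= `|\sum_(i < nE) int0 (ell i) (f i)| + L * d.
Proof.
move=> mf fc.
have int_bounds i : ell i * (c - d) <= int0 (ell i) (f i) <= ell i * (c + d).
  apply: int0_bounds; [exact: ltW | exact: mf | move=> s /(fc i)].
  by rewrite ler_norml => /andP[h1 h2]; apply/andP; split; lra.
set I := \sum_(i < nE) int0 (ell i) (f i).
have lo : L * (c - d) <= I.
  by rewrite mulr_suml; apply: ler_sum => i _; case/andP: (int_bounds i).
have hi : I <= L * (c + d).
  by rewrite mulr_suml; apply: ler_sum => i _; case/andP: (int_bounds i).
move: lo hi; rewrite mulrBr mulrDr.
have := ler_norm I; have := ler_norm (- I); rewrite normrN.
case: (lerP 0 c) => c0; [rewrite [`|c|]ger0_norm // | rewrite [`|c|]ltr0_norm // mulrN]; lra.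
Qed.

Lemma sum_int0_sqr_le (f : 'I_nE -> R -> R) (M : R) :
  (forall i, measurable_fun `[0, ell i] (f i)) ->
  (forall i s, 0 <= s <= ell i -> `|f i s| <= M) ->
  \sum_(i < nE) int0 (ell i) (fun s => f i s ^+ 2) <= L * M ^+ 2.
Proof.
move=> mf fM; rewrite mulr_suml; apply: ler_sum => i _.
have fi_bounds : ell i * 0 <= int0 (ell i) (fun s => f i s ^+ 2) <= ell i * M ^+ 2.
  apply: int0_bounds; [exact: ltW | exact: measurable_funX | move=> s /(fM i) fsM].
  rewrite sqr_ge0 -real_normK ?num_real //; have := normr_ge0 (f i s); nra.
by case/andP: fi_bounds.
Qed.

(* [sqrt L * r] bounds each oscillation on an edge, [(sqrt L + 2) * r] each
   jump of the vertex values along an edge *)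
Definition spread_const := Num.sqrt L + 1 + nV%:R * (Num.sqrt L + 2).

(* [(1 + 2 L spread_const) / L * r] is the uniform bound on the functions *)
Definition poincare_const := L * ((1 + 2 * L * spread_const) / L) ^+ 2.

Lemma spread_const_ge0 : 0 <= spread_const.
Proof.
by rewrite !addr_ge0 ?mulr_ge0 ?addr_ge0 ?sqrtr_ge0 ?ler0n.
Qed.

Lemma poincare_const_ge0 : 0 <= poincare_const.
Proof. by rewrite mulr_ge0 ?sqr_ge0 ?total_length_ge0. Qed.

Hypothesis connected : graph_connected tail head.

Section residual.
Variables (f f' : 'I_nE -> R -> R) (W : 'I_nV -> R) (r : R).
Hypotheses (fH1 : forall i, isH1 (ell i) (f i) (f' i)) (r_ge0 : 0 <= r).
Hypothesis deriv_le : forall i, int0 (ell i) (fun s => f' i s ^+ 2) <= r ^+ 2.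
Hypothesis tail_le : forall i, `|f i 0 - W (tail i)| <= r.
Hypothesis head_le : forall i, `|f i (ell i) - W (head i)| <= r.

Lemma oscillation_le i s : 0 <= s <= ell i -> `|f i s - f i 0| <= Num.sqrt L * r.
Proof.
move=> s_itv.
have -> : Num.sqrt L * r = Num.sqrt (L * r ^+ 2).
  by rewrite sqrtrM ?total_length_ge0 // sqrtr_sqr ger0_norm.
apply/norm_le_sqrt/(le_trans (isH1_oscillation (ell_gt0 i) (fH1 i) s_itv)).
apply: ler_pM; [exact: ltW | | exact: ell_le_total_length | exact: deriv_le].
by apply: Rintegral_ge0 => x _; exact: sqr_ge0.
Qed.

Lemma edge_jump_le i : `|W (head i) - W (tail i)| <= (Num.sqrt L + 2) * r.
Proof.
have ell_itv : 0 <= ell i <= ell i by rewrite lexx ltW.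
have := oscillation_le ell_itv.
have -> : W (head i) - W (tail i) =
    (f i (ell i) - f i 0) - (f i (ell i) - W (head i)) + (f i 0 - W (tail i)) by ring.
have := ler_normD ((f i (ell i) - f i 0) - (f i (ell i) - W (head i))) (f i 0 - W (tail i)).
have := ler_normB (f i (ell i) - f i 0) (f i (ell i) - W (head i)).
have := head_le i; have := tail_le i.
rewrite mulrDl; lra.
Qed.

Lemma near_const : exists c, forall i s, 0 <= s <= ell i ->
  `|f i s - c| <= spread_const * r.
Proof.
have [nV_gt0 conn] := connected; set j0 := Ordinal nV_gt0.
exists (W j0) => i s s_itv.
have jump_ge0 : 0 <= (Num.sqrt L + 2) * r by rewrite mulr_ge0 ?addr_ge0 ?sqrtr_ge0.
have := connect_dist_le edge_jump_le jump_ge0 (conn j0 (tail i)).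
have := oscillation_le s_itv; have := tail_le i.
have -> : f i s - W j0 = (f i s - f i 0) + (f i 0 - W (tail i)) + (W (tail i) - W j0) by ring.
have := ler_normD ((f i s - f i 0) + (f i 0 - W (tail i))) (W (tail i) - W j0).
have := ler_normD (f i s - f i 0) (f i 0 - W (tail i)).
rewrite /spread_const !mulrDl mul1r -mulrA; lra.
Qed.

Lemma scalar_poincare_residual :
  `|\sum_(i < nE) int0 (ell i) (f i)| <= r ->
  \sum_(i < nE) int0 (ell i) (fun s => f i s ^+ 2) <= poincare_const * r ^+ 2.
Proof.
move=> mean_le; have [c near] := near_const.
have mf i := isH1_measurable (ell_gt0 i) (fH1 i).
have c_le := approx_const_le mf near.
have q_ge0 := spread_const_ge0.
set q := spread_const in near c_le q_ge0 *; set Z := (1 + 2 * L * q) / L.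
have f_le i s : 0 <= s <= ell i -> `|f i s| <= Z * r.
  move=> s_itv; have L_gt0 : 0 < L := lt_le_trans (ell_gt0 i) (ell_le_total_length i).
  have LZ : L * Z = 1 + 2 * L * q by rewrite mulrC divfK // gt_eqF.
  have f_near : `|f i s| <= q * r + `|c|.
    by have := ler_normD (f i s - c) c; rewrite subrK; have := near i s s_itv; lra.
  rewrite -(ler_pM2l L_gt0) mulrA LZ.
  apply: le_trans (ler_wpM2l (ltW L_gt0) f_near) _.
  have -> : (1 + 2 * L * q) * r = r + 2 * (L * (q * r)) by ring.
  rewrite mulrDr; lra.
apply: le_trans (sum_int0_sqr_le mf f_le) _.
by rewrite /poincare_const exprMn mulrA.
Qed.

End residual.

Lemma scalar_poincare (f f' : 'I_nE -> R -> R) (W : 'I_nV -> R) :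
  (forall i, isH1 (ell i) (f i) (f' i)) ->
  \sum_(i < nE) int0 (ell i) (fun s => f i s ^+ 2) <= poincare_const * (
     \sum_(i < nE) int0 (ell i) (fun s => f' i s ^+ 2)
   + (\sum_(i < nE) int0 (ell i) (f i)) ^+ 2
   + \sum_(i < nE) (f i 0 - W (tail i)) ^+ 2
   + \sum_(i < nE) (f i (ell i) - W (head i)) ^+ 2).
Proof.
move=> fH1.
set D := \sum_(i < nE) int0 (ell i) (fun s => f' i s ^+ 2).
set M := (\sum_(i < nE) int0 (ell i) (f i)) ^+ 2.
set E0 := \sum_(i < nE) (f i 0 - W (tail i)) ^+ 2.
set E1 := \sum_(i < nE) (f i (ell i) - W (head i)) ^+ 2.
have D_ge0 : 0 <= D by apply: sumr_ge0 => i _; apply: Rintegral_ge0 => x _; exact: sqr_ge0.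
have M_ge0 : 0 <= M by exact: sqr_ge0.
have E0_ge0 : 0 <= E0 by apply: sumr_ge0 => i _; exact: sqr_ge0.
have E1_ge0 : 0 <= E1 by apply: sumr_ge0 => i _; exact: sqr_ge0.
have T_ge0 : 0 <= D + M + E0 + E1 by lra.
rewrite -(sqr_sqrtr T_ge0); apply: (scalar_poincare_residual fH1 (W := W)).
- exact: sqrtr_ge0.
- move=> i; rewrite sqr_sqrtr //; apply: le_trans (_ : D <= _); last by lra.
  apply: (ler_sum_term (F := fun i => int0 (ell i) _)) => j.
  by apply: Rintegral_ge0 => x _; exact: sqr_ge0.
- move=> i; apply: norm_le_sqrt; apply: le_trans (_ : E0 <= _); last by lra.
  by apply: (ler_sum_term (F := fun i => (f i 0 - W (tail i)) ^+ 2)) => j; exact: sqr_ge0.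
- move=> i; apply: norm_le_sqrt; apply: le_trans (_ : E1 <= _); last by lra.
  by apply: (ler_sum_term (F := fun i => (f i (ell i) - W (head i)) ^+ 2)) => j; exact: sqr_ge0.
- by apply: norm_le_sqrt; rewrite -/M; lra.
Qed.

End scalar_poincare.

Lemma AT_apply_single {R : realType} (nV nE : nat) (J : 'I_nV -> pred 'I_nE)
    (V : 'I_nV -> 'I_3 -> R) i k j0 :
  (forall j, (i \in J j) = (j == j0)) -> AT_apply J V i k = V j0 k.
Proof.
move=> iJ; rewrite /AT_apply (bigD1 j0) //= iJ eqxx big1 ?addr0 // => j /negbTE.
by rewrite iJ => ->.
Qed.

Theorem lemma3p2 (R : realType) (nV nE : nat)
    (tail head : 'I_nE -> 'I_nV) (ell : 'I_nE -> R) :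
  graph_connected tail head ->
  (forall i, 0 < ell i) ->
  exists C : R, 0 < C /\
    forall (v dv : 'I_nE -> 'I_3 -> R -> R) (V : 'I_nV -> 'I_3 -> R),
      (forall i k, isH1 (ell i) (v i k) (dv i k)) ->
      Num.sqrt (\sum_(i < nE) \sum_(k < 3) int0 (ell i) (fun s => v i k s ^+ 2))
      <= C * Num.sqrt (
           \sum_(i < nE) \sum_(k < 3) int0 (ell i) (fun s => dv i k s ^+ 2)
         + sqn3 (fun k => \sum_(i < nE) int0 (ell i) (v i k))
         + \sum_(i < nE) sqn3 (fun k => v i k 0 - AT_apply (Jminus tail) V i k)
         + \sum_(i < nE) sqn3 (fun k => v i k (ell i) - AT_apply (Jplus head) V i k)).
Proof.
move=> connected ell_gt0; have C_ge0 := poincare_const_ge0 nV ell_gt0.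
exists (Num.sqrt (poincare_const nV ell) + 1).
split; first exact: ltr_wpDl (sqrtr_ge0 _) ltr01.
move=> v dv V vH1; set S := (X in _ <= _ * Num.sqrt X).
have S_by_coord : S = \sum_(k < 3) (
     \sum_(i < nE) int0 (ell i) (fun s => dv i k s ^+ 2)
   + (\sum_(i < nE) int0 (ell i) (v i k)) ^+ 2
   + \sum_(i < nE) (v i k 0 - V (tail i) k) ^+ 2
   + \sum_(i < nE) (v i k (ell i) - V (head i) k) ^+ 2).
  rewrite /S /sqn3 !big_split /= exchange_big; congr (_ + _ + _ + _).
  - rewrite exchange_big; apply: eq_bigr => k _; apply: eq_bigr => i _.
    by rewrite (AT_apply_single _ _ _ (j0 := tail i)) // => j; rewrite unfold_in eq_sym.
  - rewrite exchange_big; apply: eq_bigr => k _; apply: eq_bigr => i _.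
    by rewrite (AT_apply_single _ _ _ (j0 := head i)) // => j; rewrite unfold_in eq_sym.
have : \sum_(i < nE) \sum_(k < 3) int0 (ell i) (fun s => v i k s ^+ 2)
    <= poincare_const nV ell * S.
  rewrite exchange_big S_by_coord mulr_sumr; apply: ler_sum => k _.
  exact: (scalar_poincare ell_gt0 connected (fun j => V j k) (fun i => vH1 i k)).
move/ler_wsqrtr/le_trans; apply.
by rewrite sqrtrM // mulrDl mul1r lerDl sqrtr_ge0.
Qed.
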